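(* Let $h,n\geq 2$ and let $V\leq S_h$ contain a complete intransitive subgroup of $S_h$ in $k$ blocks, for some $2\leq k\leq\min\{h,n!\}$. Then $V\times\{id\}$ is an anonymity group with respect to $(h,n)$.
   Context: For a partition $\{H_1,\dots,H_k\}$ of $H=[h]$ into $k$ nonempty parts, the subgroup $S_{H_1}\times\cdots\times S_{H_k}\leq S_h$ (permutations preserving each $H_i$) is called a complete intransitive subgroup of $S_h$ in $k$ blocks. Permutations compose as $(\sigma\tau)(x)=\sigma(\tau(x))$. Let $G=S_h\times S_n$ and $\mathcal{P}=(S_n)^h$ (preference profiles), with action $(p^{(\varphi,\psi)})_i=\psi\,p_{\varphi^{-1}(i)}$. A social preference function (SPF) is any $F:\mathcal{P}\to S_n$; its symmetry group is $G(F)=\{(\varphi,\psi)\in G: F(p^{(\varphi,\psi)})=\psi F(p)\ \forall p\}$ and its anonymity group is $G_1(F)=G(F)\cap(S_h\times\{id\})$. A subgroup $U\leq S_h\times\{id\}$ is an anonymity group with respect to $(h,n)$ if $U=G_1(F)$ for some SPF $F$. *)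

From mathcomp Require Import all_boot all_fingroup.
Set Implicit Arguments. Unset Strict Implicit. Unset Printing Implicit Defensive.
Import GroupScope.

(* Function-composition order: pcomp s t = s o t, i.e. (pcomp s t) x = s (t x).
   (MathComp's perm product is (s * t) x = t (s x).) *)
Definition pcomp (T : finType) (s t : {perm T}) : {perm T} := (t * s)%g.

Definition profile (h n : nat) := {ffun 'I_h -> 'S_n}.

Definition SPF (h n : nat) := profile h n -> 'S_n.

Definition act (h n : nat) (phi : 'S_h) (psi : 'S_n) (p : profile h n)
  : profile h n := [ffun i => pcomp psi (p (phi^-1 i))].

Definition symmetry_group (h n : nat) (F : SPF h n) : {set 'S_h * 'S_n} :=
  [set g | [forall p : profile h n, F (act g.1 g.2 p) == pcomp g.2 (F p)]].

Definition anonymity_group (h n : nat) (F : SPF h n) : {set 'S_h * 'S_n} :=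
  symmetry_group F :&: setX [set: 'S_h] [set 1].

Definition is_anonymity_group (h n : nat) (U : {set 'S_h * 'S_n}) : Prop :=
  exists F : SPF h n, U = anonymity_group F.

(* Complete intransitive subgroup S_{H_1} x ... x S_{H_k} for a partition P
   of [h]: permutations preserving each block. *)
Definition complete_intransitive (h : nat) (P : {set {set 'I_h}}) : {set 'S_h} :=
  [set s : 'S_h | [forall B in P, (fun x => s x) @: B == B]].

Definition contains_cis_k (h k : nat) (V : {set 'S_h}) : Prop :=
  exists P : {set {set 'I_h}},
    [/\ partition P [set: 'I_h], #|P| = k & complete_intransitive P \subset V].

From Pilot Require Import Defs.
From mathcomp Require Import all_boot all_fingroup.
Set Implicit Arguments. Unset Strict Implicit. Unset Printing Implicit Defensive.
Import GroupScope.

(* Label the blocks of the partition by pairwise distinct preferences (possible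
   as k <= n!) and let p0 give every voter the label of its block.  A voter
   permutation fixes p0 exactly when it preserves every block, so the stabiliser
   of p0 lies in V.  The SPF that returns a fixed sigma <> id on the V-orbit of
   p0 and id elsewhere is invariant under V; conversely a voter permutation
   phi leaving it invariant must map p0 into its V-orbit, so phi lies in
   (stabiliser of p0) * V = V. *)

Lemma exists_injective_on (aT rT : finType) (y0 : rT) (A : {set aT}) :
  #|A| <= #|rT| -> exists f : aT -> rT, {in A &, injective f}.
Proof.
move=> le_A_rT; exists (fun x => nth y0 (enum rT) (index x (enum A))).
have index_lt x : x \in A -> index x (enum A) < size (enum rT).
  by move=> xA; rewrite -cardT (leq_trans _ le_A_rT) // cardE index_mem mem_enum.
move=> x y xA yA /eqP; rewrite nth_uniq ?index_lt ?enum_uniq // => /eqP.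
by apply: (index_inj x); rewrite mem_enum.
Qed.

Lemma perm_nontrivial n : 1 < n -> exists sigma : 'S_n, sigma != 1.
Proof.
move=> n_gt1; pose a : 'I_n := Ordinal (ltnW n_gt1); pose b : 'I_n := Ordinal n_gt1.
exists (tperm a b); apply/eqP => /permP/(_ a).
by rewrite tpermL perm1 => /(congr1 val).
Qed.

Section VoterAction.

Variables h n : nat.

Definition vact (p : profile h n) (phi : 'S_h) : profile h n := Defs.act phi 1 p.

Lemma vactE p phi i : vact p phi i = p (phi^-1 i).
Proof. by rewrite /vact /Defs.act ffunE /Defs.pcomp mulg1. Qed.

Lemma vact1 p : vact p 1 = p.
Proof. by apply/ffunP => i; rewrite vactE invg1 perm1. Qed.

Lemma vactM p : act_morph vact p.
Proof. by move=> phi psi; apply/ffunP => i; rewrite !vactE invMg permM. Qed.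

Canonical voter_action := TotalAction vact1 vactM.

Lemma anonymity_group_of_astab1 (V : {group 'S_h}) (p0 : profile h n)
    (sigma : 'S_n) :
  sigma != 1 -> 'C[p0 | voter_action] \subset V ->
  is_anonymity_group (setX V [set 1] : {set 'S_h * 'S_n}).
Proof.
move=> sigma_neq1 stab_sub_V.
pose O := orbit voter_action V p0.
pose F (p : profile h n) := if p \in O then sigma else 1.
exists F; apply/setP => -[phi psi]; rewrite !inE /=.
case: (psi =P 1) => [-> | _]; last by rewrite !andbF.
rewrite !andbT; apply/idP/forallP => [phiV p | F_inv].
  by rewrite /Defs.pcomp mulg1 /F -[Defs.act _ _ _]/(vact p phi) orbit_actr.
have /orbitP[v vV p0v_eq] : vact p0 phi \in O.
  move: (F_inv p0); rewrite /Defs.pcomp mulg1 /F orbit_refl.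
  by case: ifP => // _ /eqP sigma_eq1; rewrite sigma_eq1 eqxx in sigma_neq1.
have phivV_stab : phi * v^-1 \in 'C[p0 | voter_action].
  by apply/astab1P; rewrite /= vactM -p0v_eq actK.
by rewrite -(mulgKV v phi) groupM // (subsetP stab_sub_V).
Qed.

End VoterAction.

Arguments voter_action {h n}.

Section BlockProfile.

Variables (h n : nat) (P : {set {set 'I_h}}) (label : {set 'I_h} -> 'S_n).
Hypotheses (partP : partition P [set: 'I_h]) (label_inj : {in P &, injective label}).

Definition block_profile : profile h n := [ffun i => label (pblock P i)].

Lemma astab1_block_profile :
  'C[block_profile | voter_action] \subset complete_intransitive P.
Proof.
have [/eqP coverP trivP _] := and3P partP.
have pblockP x : pblock P x \in P by rewrite pblock_mem // coverP inE.
apply/subsetP => phi /astab1P fix_p0; rewrite inE; apply/forall_inP => B BP.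
have pblock_phi x : pblock P (phi x) = pblock P x.
  have := congr1 (fun p : profile h n => p (phi x)) fix_p0.
  by rewrite /= vactE !ffunE permK => /label_inj ->.
rewrite eqEcard card_imset ?leqnn ?andbT; last exact: perm_inj.
apply/subsetP => _ /imsetP[x xB ->].
by rewrite -(def_pblock trivP BP xB) -pblock_phi mem_pblock coverP inE.
Qed.

End BlockProfile.

Theorem mainTheorem3 (h n k : nat) (V : {group 'S_h}) :
  2 <= h -> 2 <= n -> 2 <= k -> k <= minn h n`! ->
  contains_cis_k k V ->
  is_anonymity_group (setX V [set 1%g] : {set 'S_h * 'S_n}).
Proof.
move=> _ n_gt1 _ k_le [P [partP cardP cis_sub_V]].
have [label label_inj] : exists label : {set 'I_h} -> 'S_n, {in P &, injective label}.
  apply: exists_injective_on 1 _ _.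
  by rewrite cardP card_Sn; move: k_le; rewrite leq_min => /andP[].
have [sigma sigma_neq1] := perm_nontrivial n_gt1.
apply: (anonymity_group_of_astab1 (p0 := block_profile P label) sigma_neq1).
exact: subset_trans (astab1_block_profile partP label_inj) cis_sub_V.
Qed.
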